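(* Let $G$ be a group with subgroups $H,J$ such that $H\ne G$, $|J:H\cap J|=2$ and $|H:H\cap J|$ finite; let $g\in J\setminus(H\cap J)$, $K=H\cap H^g$, $\lambda=|K:H\cap J|$, $L=\langle K,g\rangle$, $\Gamma=\mathrm{Cos}(G,H,J)$ and $\Sigma=\mathrm{Cos}(G,H,L)$. Suppose $b$ is an odd integer and $J'$ is a subgroup with $\langle g^b\rangle\le J'\le J$ and $\mu=|J:J'|$ finite. Then $|J':H\cap J'|=2$, $|H:H\cap J'|$ is finite, $\Gamma'=\mathrm{Cos}(G,H,J')$ is $G$-arc-transitive, $\Gamma'$ is a $(G,\mu)$-extender of $\Gamma$, and $\Gamma'$ is a $(G,\lambda\mu)$-extender of $\Sigma$.
   Context: $\mathrm{Cos}(G,H,J)$ (for $H\ne G$, $|J:H\cap J|=2$, $|H:H\cap J|<\infty$) is the graph with vertex set $\{Hx:x\in G\}$, edge set $\{Jy:y\in G\}$, $Hx$ incident with $Jy$ iff $yx^{-1}\in JH$, with $G$ acting by right multiplication; multiple edges are allowed. The $\mu$-extender $\Gamma^{(\mu)}$ of a graph replaces every edge by $\mu$ edges with the same end vertices; $\Gamma'$ is a $(G,\mu)$-extender of $\Gamma$ if $\Gamma'\cong\Gamma^{(\mu)}$ and both are $G$-arc-transitive. *)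

From Stdlib Require Import ZArith.

Set Implicit Arguments.

Record group := Group {
  gcar :> Type;
  gmul : gcar -> gcar -> gcar;
  gone : gcar;
  ginv : gcar -> gcar;
  gmulA : forall x y z, gmul x (gmul y z) = gmul (gmul x y) z;
  gmul1 : forall x, gmul gone x = x;
  gmulV : forall x, gmul (ginv x) x = gone
}.

Arguments gmul {g}.
Arguments gone {g}.
Arguments ginv {g}.

Section Defs.
Variable G : group.

Definition is_subgroup (S : G -> Prop) : Prop :=
  S gone /\ (forall x y, S x -> S y -> S (gmul x y)) /\ (forall x, S x -> S (ginv x)).

Definition setI (A B : G -> Prop) : G -> Prop := fun x => A x /\ B x.
Definition subset (A B : G -> Prop) : Prop := forall x, A x -> B x.

Definition gen (A : G -> Prop) : G -> Prop :=
  fun x => forall S, is_subgroup S -> subset A S -> S x.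

(** H^g = g^-1 H g *)
Definition conjset (H : G -> Prop) (g : G) : G -> Prop :=
  fun x => H (gmul (gmul g x) (ginv g)).

Fixpoint npow (x : G) (n : nat) : G :=
  match n with O => gone | S n => gmul x (npow x n) end.

Definition zpow (x : G) (b : Z) : G :=
  if (0 <=? b)%Z then npow x (Z.abs_nat b) else npow (ginv x) (Z.abs_nat b).

(** |A : B| = n (B a subgroup contained in A): there are exactly n right
    cosets B x with x in A. *)
Definition index_eq (A B : G -> Prop) (n : nat) : Prop :=
  exists f : {i : nat | i < n} -> G,
    (forall i, A (f i)) /\
    (forall i j, B (gmul (f i) (ginv (f j))) -> i = j) /\
    (forall x, A x -> exists i, B (gmul x (ginv (f i)))).

Definition rcoset (H : G -> Prop) (x : G) : G -> Prop :=
  fun z => exists h, H h /\ z = gmul h x.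

Definition cosets (H : G -> Prop) := {S : G -> Prop | exists x, S = rcoset H x}.

Definition prodset (J H : G -> Prop) : G -> Prop :=
  fun z => exists j h, J j /\ H h /\ z = gmul j h.

Definition actset (S : G -> Prop) (a : G) : G -> Prop :=
  fun z => S (gmul z (ginv a)).
End Defs.

Arguments is_subgroup {G}.
Arguments setI {G}.
Arguments subset {G}.
Arguments gen {G}.
Arguments conjset {G}.
Arguments npow {G}.
Arguments zpow {G}.
Arguments index_eq {G}.
Arguments rcoset {G}.
Arguments cosets {G}.
Arguments prodset {G}.
Arguments actset {G}.

Record mgraph := MGraph { mV : Type; mE : Type; minc : mV -> mE -> Prop }.

Definition bijective {A B : Type} (f : A -> B) : Prop :=
  exists g : B -> A, (forall a, g (f a) = a) /\ (forall b, f (g b) = b).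

Definition mg_iso (X Y : mgraph) : Prop :=
  exists (fV : mV X -> mV Y) (fE : mE X -> mE Y),
    bijective fV /\ bijective fE /\
    forall v e, minc X v e <-> minc Y (fV v) (fE e).

(** mu-extender: every edge replaced by mu parallel edges. *)
Definition mg_extend (X : mgraph) (mu : nat) : mgraph :=
  MGraph (fun (v : mV X) (e : mE X * {i : nat | i < mu}) => minc X v (fst e)).

Definition Cos {G : group} (H J : G -> Prop) : mgraph :=
  MGraph (fun (v : cosets H) (e : cosets J) =>
    exists x y, proj1_sig v = rcoset H x /\ proj1_sig e = rcoset J y /\
                prodset J H (gmul y (ginv x))).

(** G acts (by right multiplication) transitively on the arcs (incident
    vertex-edge pairs) of Cos(G,H,J). *)
Definition cos_arc_transitive {G : group} (H J : G -> Prop) : Prop :=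
  forall (v v' : cosets H) (e e' : cosets J),
    minc (Cos H J) v e -> minc (Cos H J) v' e' ->
    exists a : G, proj1_sig v' = actset (proj1_sig v) a /\
                  proj1_sig e' = actset (proj1_sig e) a.

Definition cos_extender {G : group} (H J' J : G -> Prop) (mu : nat) : Prop :=
  mg_iso (Cos H J') (mg_extend (Cos H J) mu) /\
  cos_arc_transitive H J' /\ cos_arc_transitive H J.

(** Since [H ∩ J] has index 2 in [J], any two elements of [J ∖ H] differ by an element of [H],
    so every odd power of [g] lies in [J' ∖ H]; this gives [|J' : H ∩ J'| = 2] and [J ⊆ J'H].
    Whenever [E' ≤ E] and [E ⊆ E'H], [Cos(G,H,E')] is the [|E : E'|]-extender of [Cos(G,H,E)]:
    the [E']-cosets inside an [E]-coset are indexed by a transversal of [E'] in [E], and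
    incidence only depends on [EH = E'H].  For [Σ], [g] normalises [K] and [g² ∈ H ∩ J ≤ K],
    so [L = K ∪ gK ⊆ JK]; hence [J ≤ L], [L ⊆ J'H] and [|L : J| = |K : H ∩ J|]. *)

From Stdlib Require Import ZArith Lia.
From Stdlib Require Import FunctionalExtensionality PropExtensionality ProofIrrelevance.
From Stdlib Require Import ClassicalEpsilon Classical.

Arguments gmulA {g}.
Arguments gmul1 {g}.
Arguments gmulV {g}.

Local Notation "x ** y" := (gmul x y) (at level 40, left associativity).
Local Notation "x ^-1" := (ginv x) (at level 2, format "x ^-1").

Section GroupIdentities.
Context {G : group}.
Implicit Types x y : G.

Lemma mulgV x : x ** x^-1 = gone.
Proof.
  assert (idem : (x ** x^-1) ** (x ** x^-1) = x ** x^-1).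
  { rewrite <- gmulA, (gmulA x^-1 x), gmulV, gmul1. reflexivity. }
  set (y := x ** x^-1) in *.
  assert (E : y^-1 ** (y ** y) = y) by (rewrite gmulA, gmulV, gmul1; reflexivity).
  rewrite idem, gmulV in E. symmetry; exact E.
Qed.

Lemma mulg1 x : x ** gone = x.
Proof. rewrite <- (gmulV x), gmulA, mulgV, gmul1. reflexivity. Qed.

Lemma mulKg x y : x^-1 ** (x ** y) = y.
Proof. rewrite gmulA, gmulV, gmul1. reflexivity. Qed.

Lemma mulKVg x y : x ** (x^-1 ** y) = y.
Proof. rewrite gmulA, mulgV, gmul1. reflexivity. Qed.

Lemma invg_uniq x y : x ** y = gone -> y = x^-1.
Proof. intro E. rewrite <- (mulKg x y), E, mulg1. reflexivity. Qed.

Lemma invgK x : x^-1^-1 = x.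
Proof. symmetry. apply invg_uniq, gmulV. Qed.

Lemma invgM x y : (x ** y)^-1 = y^-1 ** x^-1.
Proof.
  symmetry. apply invg_uniq.
  rewrite <- gmulA, (gmulA y), mulgV, gmul1, mulgV. reflexivity.
Qed.

Lemma invg1 : (gone : G)^-1 = gone.
Proof. symmetry. apply invg_uniq, gmul1. Qed.

End GroupIdentities.

#[global] Hint Rewrite @invgM @invgK @invg1 : gsimpl.
#[global] Hint Rewrite <- @gmulA : gsimpl.
#[global] Hint Rewrite @gmul1 @mulg1 @gmulV @mulgV @mulKg @mulKVg : gsimpl.

Ltac gsimpl := autorewrite with gsimpl.
Ltac geq := gsimpl; reflexivity.

Section Subgroups.
Context {G : group}.
Implicit Types (S A B C H K : G -> Prop) (x y g : G).

Lemma group1 S : is_subgroup S -> S gone.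
Proof. intros [h _]; exact h. Qed.

Lemma groupM S x y : is_subgroup S -> S x -> S y -> S (x ** y).
Proof. intros [_ [h _]]; apply h. Qed.

Lemma groupV S x : is_subgroup S -> S x -> S x^-1.
Proof. intros [_ [_ h]]; apply h. Qed.

Lemma groupVr S x : is_subgroup S -> S x^-1 -> S x.
Proof. intros HS h. rewrite <- (invgK x). apply groupV; auto. Qed.

Lemma groupMr S x y : is_subgroup S -> S (x ** y) -> S y -> S x.
Proof.
  intros HS Hxy Hy. replace x with ((x ** y) ** y^-1) by geq.
  apply groupM, groupV; auto.
Qed.

Lemma setI_group A B : is_subgroup A -> is_subgroup B -> is_subgroup (setI A B).
Proof.
  intros HA HB. split; [|split].
  - split; apply group1; auto.
  - intros x y [] []; split; apply groupM; auto.
  - intros x []; split; apply groupV; auto.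
Qed.

Lemma gen_group A : is_subgroup (gen A).
Proof.
  split; [|split].
  - intros S HS _. apply group1; auto.
  - intros x y Hx Hy S HS HA. apply groupM; [auto | apply Hx | apply Hy]; auto.
  - intros x Hx S HS HA. apply groupV; [auto | apply Hx]; auto.
Qed.

Lemma mem_gen A x : A x -> gen A x.
Proof. intros Ax S _ AS. apply AS, Ax. Qed.

Lemma gen_min A S : is_subgroup S -> subset A S -> subset (gen A) S.
Proof. intros HS AS x Hx. apply Hx; auto. Qed.

Lemma conjset_group H g : is_subgroup H -> is_subgroup (conjset H g).
Proof.
  intro HH. unfold conjset. split; [|split].
  - gsimpl. apply group1; auto.
  - intros x y Hx Hy.
    replace (g ** (x ** y) ** g^-1) with ((g ** x ** g^-1) ** (g ** y ** g^-1)) by geq.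
    apply groupM; auto.
  - intros x Hx. replace (g ** x^-1 ** g^-1) with ((g ** x ** g^-1)^-1) by geq.
    apply groupV; auto.
Qed.

Lemma coset_union_group K g :
  is_subgroup K -> K (g ** g) -> (forall x, K x -> K (g^-1 ** x ** g)) ->
  is_subgroup (fun x => K x \/ K (g^-1 ** x)).
Proof.
  intros HK Kgg Kconj. split; [|split].
  - left. apply group1; auto.
  - intros x y [Kx|Kx] [Ky|Ky].
    + left. apply groupM; auto.
    + right. replace (g^-1 ** (x ** y)) with ((g^-1 ** x ** g) ** (g^-1 ** y)) by geq.
      apply groupM; auto.
    + right. replace (g^-1 ** (x ** y)) with ((g^-1 ** x) ** y) by geq.
      apply groupM; auto.
    + left. replace (x ** y) with ((g ** g) ** (g^-1 ** (g^-1 ** x) ** g) ** (g^-1 ** y)) by geq.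
      apply groupM; [auto | apply groupM; [auto | auto | apply Kconj; auto] | auto].
  - intros x [Kx|Kx].
    + left. apply groupV; auto.
    + right. replace (g^-1 ** x^-1) with ((g^-1 ** (g^-1 ** x)^-1 ** g) ** (g ** g)^-1) by geq.
      apply groupM; [auto | apply Kconj, groupV | apply groupV]; auto.
Qed.

Lemma prodset_subl H A B : subset A B -> subset (prodset A H) (prodset B H).
Proof. intros AB z [a [h [Aa [Hh ->]]]]. exists a, h. auto. Qed.

Lemma prodset_subr A H K : subset H K -> subset (prodset A H) (prodset A K).
Proof. intros HK z [a [h [Aa [Hh ->]]]]. exists a, h. auto. Qed.

Lemma prodset_trans H A B :
  is_subgroup H -> subset A (prodset B H) -> subset (prodset A H) (prodset B H).
Proof.
  intros HH AB z [a [h [Aa [Hh ->]]]]. destruct (AB a Aa) as [b [h' [Bb [Hh' ->]]]].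
  exists b, (h' ** h). repeat split; [auto | apply groupM; auto | geq].
Qed.

End Subgroups.

Section CosetGraphs.
Context {G : group}.
Implicit Types (S H E : G -> Prop) (x y z a : G).

Lemma rcosetP S x z : is_subgroup S -> rcoset S x z <-> S (z ** x^-1).
Proof.
  intro HS. split.
  - intros [h [Hh ->]]. gsimpl. exact Hh.
  - intro Hz. exists (z ** x^-1). split; [exact Hz | geq].
Qed.

Lemma rcoset_eq S x y : is_subgroup S -> S (x ** y^-1) -> rcoset S x = rcoset S y.
Proof.
  intros HS Hxy. apply functional_extensionality; intro z. apply propositional_extensionality.
  rewrite !rcosetP by auto. split; intro Hz.
  - replace (z ** y^-1) with ((z ** x^-1) ** (x ** y^-1)) by geq. apply groupM; auto.
  - apply (groupMr _ _ (x ** y^-1)); auto. revert Hz. gsimpl. auto.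
Qed.

Lemma rcoset_eq_mem S x y : is_subgroup S -> rcoset S x = rcoset S y -> S (x ** y^-1).
Proof.
  intros HS E. apply (rcosetP S y x HS). rewrite <- E.
  apply rcosetP; auto. gsimpl. apply group1; auto.
Qed.

Lemma cosets_inj S (c d : cosets S) : proj1_sig c = proj1_sig d -> c = d.
Proof.
  destruct c as [c pc], d as [d pd]; simpl; intros <-.
  f_equal. apply proof_irrelevance.
Qed.

Definition coset_of S x : cosets S := exist _ (rcoset S x) (ex_intro _ x eq_refl).

Definition coset_rep {S} (c : cosets S) : G :=
  proj1_sig (constructive_indefinite_description _ (proj2_sig c)).

Lemma coset_repE S (c : cosets S) : proj1_sig c = rcoset S (coset_rep c).
Proof. unfold coset_rep. destruct (constructive_indefinite_description _ _) as [x Hx]. exact Hx. Qed.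

Lemma coset_rep_of S x : is_subgroup S -> S (coset_rep (coset_of S x) ** x^-1).
Proof. intro HS. apply rcoset_eq_mem; auto. rewrite <- coset_repE. reflexivity. Qed.

Lemma minc_CosE H E (v : cosets H) (e : cosets E) x y :
  is_subgroup H -> is_subgroup E ->
  proj1_sig v = rcoset H x -> proj1_sig e = rcoset E y ->
  minc (Cos H E) v e <-> prodset E H (y ** x^-1).
Proof.
  intros HH HE Hv He. split.
  - intros [x' [y' [Hv' [He' [s [h [Hs [Hh Eyx]]]]]]]].
    rewrite Hv in Hv'. rewrite He in He'.
    apply rcoset_eq_mem in Hv'; auto. apply rcoset_eq_mem in He'; auto.
    exists (y ** y'^-1 ** s), (h ** x' ** x^-1). split; [|split].
    + apply groupM; auto.
    + replace (h ** x' ** x^-1) with (h ** (x ** x'^-1)^-1) by geq.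
      apply groupM, groupV; auto.
    + replace (y ** y'^-1 ** s ** (h ** x' ** x^-1))
        with (y ** y'^-1 ** (s ** h) ** x' ** x^-1) by geq.
      rewrite <- Eyx. geq.
  - intro P. exists x, y. auto.
Qed.

Lemma actset_rcoset S x a : is_subgroup S -> actset (rcoset S x) a = rcoset S (x ** a).
Proof.
  intro HS. apply functional_extensionality; intro z. apply propositional_extensionality.
  unfold actset. rewrite !rcosetP by auto. gsimpl. reflexivity.
Qed.

Lemma Cos_arc_rep H E (v : cosets H) (e : cosets E) :
  is_subgroup H -> is_subgroup E -> minc (Cos H E) v e ->
  exists a, proj1_sig v = rcoset H a /\ proj1_sig e = rcoset E a.
Proof.
  intros HH HE [x [y [Hv [He [s [h [Hs [Hh Eyx]]]]]]]].
  exists (h ** x). rewrite Hv, He. split; apply rcoset_eq; auto.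
  - gsimpl. apply groupV; auto.
  - replace (y ** (h ** x)^-1) with (y ** x^-1 ** h^-1) by geq. rewrite Eyx. gsimpl. exact Hs.
Qed.

Lemma Cos_arc_transitive H E :
  is_subgroup H -> is_subgroup E -> cos_arc_transitive H E.
Proof.
  intros HH HE v v' e e' I I'.
  destruct (Cos_arc_rep _ _ _ _ HH HE I) as [a [Hv He]].
  destruct (Cos_arc_rep _ _ _ _ HH HE I') as [a' [Hv' He']].
  exists (a^-1 ** a'). rewrite Hv, He, Hv', He', !actset_rcoset by auto.
  gsimpl. auto.
Qed.

End CosetGraphs.

Section Indices.
Context {G : group}.
Implicit Types (A B C H J K L : G -> Prop) (x y : G).

Lemma sig_lt_inj n (i j : {k : nat | k < n}) : proj1_sig i = proj1_sig j -> i = j.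
Proof. destruct i, j; simpl; intros ->; f_equal; apply proof_irrelevance. Qed.

Lemma index_eq_neq0 A B n : is_subgroup A -> index_eq A B n -> n <> 0.
Proof.
  intros HA [f [_ [_ f_cover]]].
  destruct (f_cover gone (group1 _ HA)) as [[i Hi] _]. lia.
Qed.

Lemma div_lt_of_lt_mul n m k : m <> 0 -> k < n * m -> k / m < n.
Proof. intros Hm Hk. apply Nat.Div0.div_lt_upper_bound; lia. Qed.

(* Tower law: [k < n * m] encodes the pair [(k / m, k mod m)]. *)
Lemma index_eq_mul A B C n m :
  is_subgroup A -> is_subgroup B -> is_subgroup C -> subset B A -> subset C B ->
  index_eq A B n -> index_eq B C m -> index_eq A C (n * m).
Proof.
  intros HA HB HC sBA sCB IAB IBC.
  assert (Hm : m <> 0) by exact (index_eq_neq0 B C m HB IBC).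
  destruct IAB as [f [fA [fD fC]]], IBC as [h [hB [hD hC]]].
  set (q (k : {k | k < n * m}) :=
         exist (fun a => a < n) (proj1_sig k / m) (div_lt_of_lt_mul n m _ Hm (proj2_sig k))).
  set (r (k : {k | k < n * m}) :=
         exist (fun a => a < m) (proj1_sig k mod m) (Nat.mod_upper_bound _ _ Hm)).
  exists (fun k => h (r k) ** f (q k)). split; [|split].
  - intro k. apply groupM; [auto | apply sBA, hB | apply fA].
  - intros k k' P.
    assert (Eq : q k = q k').
    { apply fD.
      replace (f (q k) ** (f (q k'))^-1)
        with ((h (r k))^-1 ** ((h (r k) ** f (q k)) ** (h (r k') ** f (q k'))^-1) ** h (r k'))
        by geq.
      apply groupM; [auto | apply groupM; [auto | apply groupV, hB | apply sCB, P] | apply hB];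
        auto. }
    assert (Er : r k = r k').
    { apply hD. rewrite Eq in P. revert P. gsimpl. auto. }
    apply (f_equal (@proj1_sig _ _)) in Eq, Er. simpl in Eq, Er.
    apply sig_lt_inj. rewrite (Nat.div_mod_eq (proj1_sig k) m), (Nat.div_mod_eq (proj1_sig k') m).
    lia.
  - intros x Hx. destruct (fC x Hx) as [[i ip] Hi]. destruct (hC _ Hi) as [[j jp] Hj].
    assert (kp : i * m + j < n * m) by nia.
    exists (exist _ (i * m + j) kp).
    assert (Er : r (exist _ (i * m + j) kp) = exist _ j jp).
    { apply sig_lt_inj. simpl. symmetry. apply (Nat.mod_unique _ _ i); lia. }
    assert (Eq : q (exist _ (i * m + j) kp) = exist _ i ip).
    { apply sig_lt_inj. simpl. symmetry. apply (Nat.div_unique _ _ _ j); lia. }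
    rewrite Er, Eq. revert Hj. gsimpl. auto.
Qed.

End Indices.

Section IndexTransfer.
Context {G : group}.
Implicit Types (A B C H J K L : G -> Prop) (x y : G).

(* When [A = BC], each [B]-coset in [A] meets [C], so a transversal can be chosen inside [C]. *)
Lemma index_eq_setI A B C n :
  is_subgroup A -> is_subgroup B -> is_subgroup C ->
  subset B A -> subset A (prodset B C) ->
  index_eq A B n -> index_eq (setI C A) (setI C B) n.
Proof.
  intros HA HB HC sBA sABC [f [fA [fD fC]]].
  assert (meet : forall i, exists c, (C c /\ A c) /\ B (c ** (f i)^-1)).
  { intro i. destruct (sABC _ (fA i)) as [b [c [Bb [Cc Ef]]]].
    exists c. repeat split; auto.
    - replace c with (b^-1 ** f i) by (rewrite Ef; geq).
      apply groupM; [auto | apply groupV, sBA | apply fA]; auto.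
    - rewrite Ef. gsimpl. apply groupV; auto. }
  set (c i := proj1_sig (constructive_indefinite_description _ (meet i))).
  assert (cP : forall i, (C (c i) /\ A (c i)) /\ B (c i ** (f i)^-1))
    by (intro i; exact (proj2_sig (constructive_indefinite_description _ (meet i)))).
  exists c. split; [|split].
  - intro i. apply cP.
  - intros i j [_ Bij]. apply fD.
    replace (f i ** (f j)^-1)
      with ((c i ** (f i)^-1)^-1 ** (c i ** (c j)^-1) ** (c j ** (f j)^-1)) by geq.
    apply groupM; [auto | apply groupM; [auto | apply groupV, cP | exact Bij] | apply cP]; auto.
  - intros x [Cx Ax]. destruct (fC x Ax) as [i Bx]. exists i. split.
    + apply groupM, groupV; auto; apply cP.
    + replace (x ** (c i)^-1) with ((x ** (f i)^-1) ** (c i ** (f i)^-1)^-1) by geq.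
      apply groupM, groupV; auto; apply cP.
Qed.

Lemma index_eq_prodset H J K L n :
  is_subgroup J -> is_subgroup K ->
  subset K H -> subset K L -> subset L (prodset J K) ->
  index_eq K (setI H J) n -> index_eq L J n.
Proof.
  intros HJ HK sKH sKL sLJK [f [fK [fD fC]]]. exists f. split; [|split].
  - intro i. apply sKL, fK.
  - intros i j Jij. apply fD. split; auto.
    apply sKH, groupM, groupV; auto.
  - intros x Lx. destruct (sLJK x Lx) as [j [k [Jj [Kk ->]]]].
    destruct (fC k Kk) as [i [_ Jk]]. exists i.
    gsimpl. apply groupM; auto.
Qed.

End IndexTransfer.

(* The [E']-cosets inside [Ey] are the [E'f_i y] for a transversal [f] of [E'] in [E], and since
   [EH = E'H] each of them is incident with exactly the vertices incident with [Ey]. *)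
Section Extender.
Context {G : group}.
Variables (H E' E : G -> Prop) (n : nat) (f : {i : nat | i < n} -> G).
Hypotheses (HH : is_subgroup H) (HE' : is_subgroup E') (HE : is_subgroup E).
Hypotheses (sE'E : subset E' E) (sEE'H : subset E (prodset E' H)).
Hypotheses (fE : forall i, E (f i)) (fD : forall i j, E' (f i ** (f j)^-1) -> i = j)
  (fC : forall x, E x -> exists i, E' (x ** (f i)^-1)).

Lemma coset_pos_ex (z : G) : exists i, E' (z ** (coset_rep (coset_of E z))^-1 ** (f i)^-1).
Proof.
  apply fC. replace (z ** (coset_rep (coset_of E z))^-1)
    with ((coset_rep (coset_of E z) ** z^-1)^-1) by geq.
  apply groupV, coset_rep_of; auto.
Qed.

Definition coset_pos (z : G) : {i : nat | i < n} :=
  proj1_sig (constructive_indefinite_description _ (coset_pos_ex z)).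

Lemma coset_posP (z : G) : E' (z ** (coset_rep (coset_of E z))^-1 ** (f (coset_pos z))^-1).
Proof. exact (proj2_sig (constructive_indefinite_description _ (coset_pos_ex z))). Qed.

Definition split_edge (c : cosets E') : cosets E * {i : nat | i < n} :=
  (coset_of E (coset_rep c), coset_pos (coset_rep c)).

Definition merge_edge (p : cosets E * {i : nat | i < n}) : cosets E' :=
  coset_of E' (f (snd p) ** coset_rep (fst p)).

Lemma merge_splitK (c : cosets E') : merge_edge (split_edge c) = c.
Proof.
  apply cosets_inj. unfold merge_edge, split_edge; simpl. rewrite (coset_repE _ c).
  symmetry. apply rcoset_eq; auto. pose proof (coset_posP (coset_rep c)) as P.
  revert P. gsimpl. auto.
Qed.

Lemma split_mergeK (p : cosets E * {i : nat | i < n}) : split_edge (merge_edge p) = p.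
Proof.
  destruct p as [c i]. unfold merge_edge, split_edge; simpl.
  set (w := f i ** coset_rep c). set (z := coset_rep (coset_of E' w)).
  assert (Ez : E' (z ** w^-1)) by (apply coset_rep_of; auto).
  assert (Hc : coset_of E z = c).
  { apply cosets_inj. simpl. rewrite (coset_repE _ c). apply rcoset_eq; auto.
    replace (z ** (coset_rep c)^-1) with ((z ** w^-1) ** f i) by (unfold w; geq).
    apply groupM; auto. }
  rewrite Hc. f_equal. pose proof (coset_posP z) as P. rewrite Hc in P.
  apply fD. replace (f (coset_pos z) ** (f i)^-1)
    with ((z ** (coset_rep c)^-1 ** (f (coset_pos z))^-1)^-1 ** (z ** w^-1)) by (unfold w; geq).
  apply groupM; [auto | apply groupV | ]; auto.
Qed.

Lemma prodset_E'H_iff z : prodset E' H z <-> prodset E H z.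
Proof.
  split; [apply prodset_subl; auto | apply prodset_trans; auto].
Qed.

Lemma Cos_iso_extend : mg_iso (Cos H E') (mg_extend (Cos H E) n).
Proof.
  exists (fun v => v), split_edge. split; [|split].
  - exists (fun v => v); auto.
  - exists merge_edge. split; [exact merge_splitK | exact split_mergeK].
  - intros v c. simpl.
    rewrite (minc_CosE _ _ v c (coset_rep v) (coset_rep c) HH HE' (coset_repE _ v) (coset_repE _ c)).
    rewrite (minc_CosE _ _ v (coset_of E (coset_rep c)) (coset_rep v) (coset_rep c)
               HH HE (coset_repE _ v) eq_refl).
    apply prodset_E'H_iff.
Qed.

End Extender.

Lemma cos_extender_of {G : group} (H E' E : G -> Prop) n :
  is_subgroup H -> is_subgroup E' -> is_subgroup E ->
  subset E' E -> subset E (prodset E' H) -> index_eq E E' n ->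
  cos_extender H E' E n.
Proof.
  intros HH HE' HE sE'E sEE'H [f [fE [fD fC]]].
  split; [|split; apply Cos_arc_transitive; auto].
  exact (Cos_iso_extend H E' E n f HH HE' HE sE'E sEE'H fE fD fC).
Qed.

Section IndexTwo.
Context {G : group}.
Variables (H J : G -> Prop).
Hypotheses (HH : is_subgroup H) (HJ : is_subgroup J) (I2 : index_eq J (setI H J) 2).

(* Two elements of [J ∖ H] lie in the same coset of [H ∩ J], the one not containing [1]. *)
Lemma index2_mulV u v : J u -> J v -> ~ H u -> ~ H v -> H (u ** v^-1).
Proof.
  intros Ju Jv nHu nHv. destruct I2 as [f [_ [_ fC]]].
  destruct (fC gone (group1 _ HJ)) as [i0 [H0 _]].
  destruct (fC u Ju) as [iu [Hu _]]. destruct (fC v Jv) as [iv [Hv _]].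
  assert (Hf0 : H (f i0)) by (apply (groupVr _ _ HH); revert H0; gsimpl; auto).
  assert (mem_of_coset0 : forall x, H (x ** (f i0)^-1) -> H x).
  { intros x Hx. apply (groupMr _ _ (f i0)^-1); [| | apply groupV]; auto. }
  assert (iu <> i0) by (intros ->; auto).
  assert (iv <> i0) by (intros ->; auto).
  assert (Euv : iu = iv).
  { destruct iu as [a pa], iv as [b pb], i0 as [c pc]. apply sig_lt_inj; simpl.
    assert (a <> c) by (intros ->; auto using sig_lt_inj).
    assert (b <> c) by (intros ->; auto using sig_lt_inj). lia. }
  subst iv.
  replace (u ** v^-1) with ((u ** (f iu)^-1) ** (v ** (f iu)^-1)^-1) by geq.
  apply groupM; [| | apply groupV]; auto.
Qed.

Lemma notin_groupV x : ~ H x -> ~ H x^-1.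
Proof. intros nHx Hx. apply nHx, (groupVr _ _ HH Hx). Qed.

Lemma index2_Vmul u v : J u -> J v -> ~ H u -> ~ H v -> H (u^-1 ** v).
Proof.
  intros. rewrite <- (invgK v).
  apply index2_mulV; try apply notin_groupV; try apply groupV; auto.
Qed.

Lemma index2_mul u v : J u -> J v -> ~ H u -> ~ H v -> H (u ** v).
Proof.
  intros. rewrite <- (invgK v).
  apply index2_mulV; try apply notin_groupV; try apply groupV; auto.
Qed.

Lemma npow_index2 x : J x -> ~ H x ->
  forall k, J (npow x k) /\ (H (npow x k) <-> Nat.even k = true).
Proof.
  intros Jx nHx. induction k as [|k [Jk IHk]].
  - simpl. split; [apply group1 | split; [| intros _; apply group1]]; auto.
  - change (npow x (S k)) with (x ** npow x k).
    split; [apply groupM; auto |]. rewrite Nat.even_succ, <- Nat.negb_even.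
    destruct (Nat.even k); simpl.
    + split; [intro Hxk | discriminate]. exfalso.
      apply nHx, (groupMr _ _ (npow x k)); auto. apply IHk. reflexivity.
    + split; [reflexivity | intros _]. apply index2_mul; auto.
      intro Hk. apply IHk in Hk. discriminate.
Qed.

Lemma zpow_odd_notin x b : J x -> ~ H x -> Z.odd b = true ->
  J (zpow x b) /\ ~ H (zpow x b).
Proof.
  intros Jx nHx odd_b.
  assert (Hk : exists k, Z.abs_nat b = 2 * k + 1).
  { apply Z.odd_spec in odd_b. destruct odd_b as [m Hm]. pose proof (Nat2Z.inj_abs_nat b).
    destruct (Z_le_gt_dec 0 m).
    - exists (Z.to_nat m). lia.
    - exists (Z.to_nat (- m - 1)). lia. }
  destruct Hk as [k Hk].
  assert (npow_odd : forall y, J y -> ~ H y -> J (npow y (2 * k + 1)) /\ ~ H (npow y (2 * k + 1))).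
  { intros y Jy nHy. destruct (npow_index2 y Jy nHy (2 * k + 1)) as [J_ H_].
    rewrite Nat.even_odd in H_. split; [exact J_ | intro Hy; apply H_ in Hy; discriminate]. }
  unfold zpow. rewrite Hk. destruct (0 <=? b)%Z.
  - apply npow_odd; auto.
  - apply npow_odd; [apply groupV | apply notin_groupV]; auto.
Qed.

Section Subgroup.
Variables (J' : G -> Prop) (t : G).
Hypotheses (HJ' : is_subgroup J') (sJ'J : subset J' J) (J't : J' t) (nHt : ~ H t).

Lemma index2_restrict : index_eq J' (setI H J') 2.
Proof.
  exists (fun i => match proj1_sig i with 0 => gone | _ => t end). split; [|split].
  - intros [[|i] p]; simpl; [apply group1 | ]; auto.
  - intros [[|[|i]] p] [[|[|j]] q] [Hij _]; simpl in Hij; try (apply sig_lt_inj; reflexivity);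
      try lia; exfalso; apply nHt; revert Hij; gsimpl; [apply (groupVr _ _ HH) | auto].
  - intros x J'x. destruct (classic (H x)) as [Hx | nHx].
    + exists (exist _ 0 (Nat.lt_0_succ 1)). simpl. gsimpl. split; auto.
    + exists (exist _ 1 (Nat.lt_succ_diag_r 1)). simpl. split.
      * apply index2_mulV; auto.
      * apply groupM, groupV; auto.
Qed.

Lemma index2_subset_prodset : subset J (prodset J' H).
Proof.
  intros x Jx. destruct (classic (H x)) as [Hx | nHx].
  - exists gone, x. repeat split; [apply group1 | | geq]; auto.
  - exists t, (t^-1 ** x). repeat split; [auto | apply index2_Vmul | geq]; auto.
Qed.

End Subgroup.

Section Sigma.
Variable g : G.
Hypotheses (Jg : J g) (nHg : ~ H g).

Lemma setIHJ_sub_K : subset (setI H J) (setI H (conjset H g)).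
Proof.
  intros x [Hx Jx]. split; auto. unfold conjset.
  assert (nHgx : ~ H (g ** x)) by (intro Hgx; apply nHg, (groupMr _ _ x); auto).
  apply index2_mulV; [apply groupM | | |]; auto.
Qed.

Lemma K_conjV x : setI H (conjset H g) x -> setI H (conjset H g) (g^-1 ** x ** g).
Proof.
  intros [Hx Kx]. unfold conjset in *.
  assert (Hgg : H (g ** g)) by (apply index2_mul; auto).
  split; gsimpl; auto.
  replace (g^-1 ** (x ** g)) with ((g ** g)^-1 ** (g ** x ** g^-1) ** (g ** g)) by geq.
  apply groupM; [auto | apply groupM; [auto | apply groupV | ] | ]; auto.
Qed.

Lemma gen_Kg_sub_prodset :
  subset (gen (fun x => setI H (conjset H g) x \/ x = g)) (prodset J (setI H (conjset H g))).
Proof.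
  set (K := setI H (conjset H g)).
  assert (HK : is_subgroup K) by (apply setI_group, conjset_group; auto).
  assert (Kgg : K (g ** g)) by (apply setIHJ_sub_K; split; [apply index2_mul | apply groupM]; auto).
  assert (L_sub : subset (gen (fun x => K x \/ x = g)) (fun x => K x \/ K (g^-1 ** x))).
  { apply gen_min; [exact (coset_union_group K g HK Kgg K_conjV) |].
    intros y [Ky | ->]; [left; auto | right; gsimpl; apply group1; auto]. }
  intros x Lx. destruct (L_sub x Lx) as [Kx | Kx].
  - exists gone, x. split; [apply group1 | split; [| geq]]; auto.
  - exists g, (g^-1 ** x). split; [| split; [| geq]]; auto.
Qed.

Lemma J_sub_gen_Kg : subset J (gen (fun x => setI H (conjset H g) x \/ x = g)).
Proof.
  intros x Jx. destruct (classic (H x)) as [Hx | nHx].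
  - apply mem_gen. left. apply setIHJ_sub_K. split; auto.
  - replace x with ((x ** g^-1) ** g) by geq.
    apply groupM; [apply gen_group | | apply mem_gen; right; reflexivity].
    apply mem_gen. left. apply setIHJ_sub_K.
    split; [apply index2_mulV | apply groupM; [| | apply groupV]]; auto.
Qed.

End Sigma.
End IndexTwo.

Theorem lemma2p9 (G : group) (H J J' : G -> Prop) (g : G) (b : Z) (mu : nat) :
  is_subgroup H -> is_subgroup J -> is_subgroup J' ->
  (exists x, ~ H x) ->
  index_eq J (setI H J) 2 ->
  (exists n, index_eq H (setI H J) n) ->
  J g -> ~ H g ->
  Z.odd b = true ->
  subset (gen (fun x => x = zpow g b)) J' -> subset J' J ->
  index_eq J J' mu ->
  let K := setI H (conjset H g) in
  let L := gen (fun x => K x \/ x = g) in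
  index_eq J' (setI H J') 2 /\
  (exists n, index_eq H (setI H J') n) /\
  cos_arc_transitive H J' /\
  cos_extender H J' J mu /\
  (forall lam, index_eq K (setI H J) lam -> cos_extender H J' L (lam * mu)).
Proof.
  intros HH HJ HJ' _ I2 [n IHJ] Jg nHg odd_b gen_gb sJ'J IJJ' K L.
  destruct (zpow_odd_notin H J HH HJ I2 g b Jg nHg odd_b) as [_ nHgb].
  assert (J'gb : J' (zpow g b)) by (apply gen_gb, mem_gen; reflexivity).
  assert (JJ'H : subset J (prodset J' H)) by exact (index2_subset_prodset H J HH HJ I2 J' _ HJ' sJ'J J'gb nHgb).
  split; [|split; [|split; [|split]]].
  - exact (index2_restrict H J HH HJ I2 J' _ HJ' sJ'J J'gb nHgb).
  - exists (n * mu). apply index_eq_mul with (setI H J); auto using setI_group.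
    + intros x [Hx _]. exact Hx.
    + intros x [Hx J'x]. split; auto.
    + apply index_eq_setI; auto.
  - apply Cos_arc_transitive; auto.
  - apply cos_extender_of; auto.
  - intros lam IK.
    assert (HK : is_subgroup K) by (apply setI_group, conjset_group; auto).
    assert (HL : is_subgroup L) by apply gen_group.
    assert (sJL : subset J L) by (apply J_sub_gen_Kg; auto).
    assert (LJK : subset L (prodset J K)) by (apply gen_Kg_sub_prodset; auto).
    assert (sKH : subset K H) by (intros x [Hx _]; exact Hx).
    apply cos_extender_of; auto.
    + intros x J'x. apply sJL, sJ'J, J'x.
    + intros x Lx. apply (prodset_trans H J J' HH JJ'H), (prodset_subr J K H sKH), LJK, Lx.
    + apply index_eq_mul with J; auto.
      apply index_eq_prodset with H K; auto.
      intros x Kx. apply mem_gen. left. exact Kx.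
Qed.
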